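(* For integers $m\ge 1$ and $n\ge 0$ let $$D_n(m)=\sum_{k=0}^{n}\binom{n-k}{k}^{m},$$ where $\binom{a}{b}=0$ whenever $b>a$. Let $(F_j)_{j\ge0}$ be the Fibonacci numbers ($F_0=0$, $F_1=1$, $F_j=F_{j-1}+F_{j-2}$) and $(L_j)_{j\ge0}$ the Lucas numbers ($L_0=2$, $L_1=1$, $L_j=L_{j-1}+L_{j-2}$). Then for every positive integer $m$, $$\lim_{n\to\infty}\frac{D_{n+1}(m)}{D_n(m)}=\frac{F_m\sqrt5+L_m}{2}.$$
   Context: $D_n(m)$ is the number of $m$-tuples of tilings of a $2\times n$ strip by dominoes in which all tilings have the same number of vertical dominoes; equivalently, the number of $m$-tuples of compositions of $n$ with parts in $\{1,2\}$ all having the same number of parts. *)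

From HB Require Import structures.
From mathcomp Require Import all_boot all_order all_algebra.
From mathcomp Require Import all_classical all_reals all_analysis.
Set Implicit Arguments. Unset Strict Implicit. Unset Printing Implicit Defensive.
Import Order.TTheory GRing.Theory Num.Theory.

Definition D (n m : nat) : nat := \sum_(k < n.+1) 'C(n - k, k) ^ m.

Fixpoint fib (j : nat) : nat :=
  match j with
  | 0 => 0
  | 1 => 1
  | S ((S i) as i1) => fib i1 + fib i
  end.

Fixpoint lucas (j : nat) : nat :=
  match j with
  | 0 => 2
  | 1 => 1
  | S ((S i) as i1) => lucas i1 + lucas i
  end.

From HB Require Import structures.
From mathcomp Require Import all_boot all_order all_algebra.
From mathcomp Require Import all_classical all_reals all_analysis.
From mathcomp Require Import zify ring lra.
Import Order.TTheory GRing.Theory Num.Theory numFieldTopology.Exports numFieldNormedType.Exports.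
Set Implicit Arguments.
Unset Strict Implicit.
Unset Printing Implicit Defensive.
Local Open Scope classical_set_scope.
Local Open Scope ring_scope.

(* With a_k = C(n-k,k) and b_k = C(n+1-k,k) we have D_n(m) = sum a_k^m and
   D_(n+1)(m) = sum b_k^m.  The ratios b_k/a_k = (n+1-k)/(n+1-2k) and
   b_(k+1)/a_k = (n-2k)/(k+1) both cross the golden ratio phi near
   k = n/(phi+2), the first increasing and the second decreasing in k.
   Cutting the index range at c and comparing a_k with b_k on one side of c
   and with b_(k+1) on the other compares D_(n+1) with phi^m D_n up to the
   single term a_c^m; averaging over L consecutive cuts makes that error at
   most D_n/L.  Hence for q < phi < Q and all L, eventually
   q^m (1 - 1/L) <= D_(n+1)/D_n <= Q^m (1 + 1/L), and phi^m = (F_m sqrt5 + L_m)/2. *)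

Section BinomialRatios.
Variables (R : numDomainType) (p k : nat).

Lemma ler_mul_bin_top (q : R) : q * (p.+1 - k)%:R <= p.+1%:R ->
  q * 'C(p, k)%:R <= 'C(p.+1, k)%:R.
Proof.
have /(congr1 (GRing.natmul (1 : R))) := mul_bin_down p.+1 k; rewrite !natrM /=.
case: (posnP (p.+1 - k)) => [/eqP|k_le_p e q_le].
  by rewrite subn_eq0 => /bin_small -> _ _; rewrite mulr0.
by rewrite -(ler_pM2l (_ : 0 < (p.+1 - k)%:R)) ?ltr0n // -e mulrCA mulrA ler_wpM2r.
Qed.

Lemma ler_bin_top_mul (Q : R) : p.+1%:R <= Q * (p.+1 - k)%:R ->
  'C(p.+1, k)%:R <= Q * 'C(p, k)%:R.
Proof.
have /(congr1 (GRing.natmul (1 : R))) := mul_bin_down p.+1 k; rewrite !natrM /=.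
case: (posnP (p.+1 - k)) => [->|k_le_p e Q_ge]; first by rewrite mulr0 lern0.
by rewrite -(ler_pM2l (_ : 0 < (p.+1 - k)%:R)) ?ltr0n // -e mulrCA mulrA ler_wpM2r.
Qed.

Lemma ler_mul_bin_bot (q : R) : q * k.+1%:R <= (p - k)%:R ->
  q * 'C(p, k)%:R <= 'C(p, k.+1)%:R.
Proof.
have /(congr1 (GRing.natmul (1 : R))) := mul_bin_left p k; rewrite !natrM /= => e hq.
by rewrite -(ler_pM2l (_ : 0 < k.+1%:R)) ?ltr0n // e mulrCA mulrA ler_wpM2r.
Qed.

Lemma ler_bin_bot_mul (Q : R) : (p - k)%:R <= Q * k.+1%:R ->
  'C(p, k.+1)%:R <= Q * 'C(p, k)%:R.
Proof.
have /(congr1 (GRing.natmul (1 : R))) := mul_bin_left p k; rewrite !natrM /= => e hQ.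
by rewrite -(ler_pM2l (_ : 0 < k.+1%:R)) ?ltr0n // e mulrCA mulrA ler_wpM2r.
Qed.

End BinomialRatios.

Section FibonacciBinomials.
Variables (R : realFieldType) (n : nat).

Lemma ler_mul_fibbin (q : R) k : (k <= n)%N ->
  (q - 1) * n.+1%:R <= (2 * q - 1) * k%:R ->
  q * 'C(n - k, k)%:R <= 'C(n.+1 - k, k)%:R.
Proof.
move=> kn hq; rewrite subSn //; apply: ler_mul_bin_top.
case: (leqP k (n - k).+1) => hk; last first.
  have -> : ((n - k).+1 - k = 0)%N by lia.
  by rewrite mulr0.
have -> : ((n - k).+1 - k)%:R = n.+1%:R - 2 * k%:R :> R.
  by rewrite -natrM -natrB; [congr _%:R|]; lia.
have -> : (n - k).+1%:R = n.+1%:R - k%:R :> R by rewrite -natrB; [congr _%:R|]; lia.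
nra.
Qed.

Lemma ler_fibbin_mul (Q : R) k : 1 <= Q ->
  (2 * Q - 1) * k%:R <= (Q - 1) * n.+1%:R ->
  'C(n.+1 - k, k)%:R <= Q * 'C(n - k, k)%:R.
Proof.
move=> Q_ge1 hQ.
have k2n : (k.*2 <= n)%N.
  rewrite -ltnS -(ltr_nat R) -mul2n natrM ltNge; apply/negP => hk.
  have : 0 <= (2 * Q - 1) * (2%:R * k%:R - n.+1%:R) by rewrite mulr_ge0 // subr_ge0; lra.
  have : 0 < n.+1%:R :> R by rewrite ltr0n.
  nra.
rewrite subSn; last by lia.
apply: ler_bin_top_mul.
have -> : ((n - k).+1 - k)%:R = n.+1%:R - 2 * k%:R :> R.
  by rewrite -natrM -natrB; [congr _%:R|]; lia.
have -> : (n - k).+1%:R = n.+1%:R - k%:R :> R by rewrite -natrB; [congr _%:R|]; lia.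
nra.
Qed.

Lemma ler_mul_fibbin_shift (q : R) k : 0 <= q ->
  (q + 2) * k.+1%:R <= n.+2%:R ->
  q * 'C(n - k, k)%:R <= 'C(n.+1 - k.+1, k.+1)%:R.
Proof.
move=> q_ge0 hq; rewrite subSS; apply: ler_mul_bin_bot.
have k2n : (k.*2 <= n)%N.
  have := mulr_ge0 q_ge0 (ler0n R k.+1).
  rewrite -(ler_nat R) -mul2n natrM -!natr1 in hq *; nra.
have -> : (n - k - k)%:R = n%:R - 2 * k%:R :> R.
  by rewrite -natrM -natrB; [congr _%:R|]; lia.
nra.
Qed.

Lemma ler_fibbin_shift_mul (Q : R) k : 0 <= Q ->
  n.+2%:R <= (Q + 2) * k.+1%:R ->
  'C(n.+1 - k.+1, k.+1)%:R <= Q * 'C(n - k, k)%:R.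
Proof.
move=> Q_ge0 hQ; rewrite subSS; apply: ler_bin_bot_mul.
case: (leqP k.*2 n) => k2n; last first.
  have -> : (n - k - k = 0)%N by lia.
  by rewrite mulr_ge0.
have -> : (n - k - k)%:R = n%:R - 2 * k%:R :> R.
  by rewrite -natrM -natrB; [congr _%:R|]; lia.
nra.
Qed.

End FibonacciBinomials.

Section CutSums.
Variables (R : realDomainType) (a b : nat -> R) (N : nat).
Hypotheses (a_ge0 : forall k, 0 <= a k) (b_ge0 : forall k, 0 <= b k).

Lemma cut_sum_ge q c : (c < N)%N ->
  (forall k, (k < c)%N -> q * a k <= b k.+1) ->
  (forall k, (c < k < N)%N -> q * a k <= b k) ->
  q * (\sum_(k < N) a k - a c) <= \sum_(k < N) b k.
Proof.
move=> cN below above; rewrite -!(big_mkord xpredT).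
rewrite (big_cat_nat (leq0n c.+1) cN) [X in _ <= X](big_cat_nat (leq0n c.+1) cN) /=.
rewrite big_nat_recr //= big_nat_recl //=.
rewrite addrAC addrK mulrDr lerD //; last first.
  by rewrite mulr_sumr; apply: ler_sum_nat => k /andP[ck kN]; apply: above; rewrite ck.
rewrite -[X in X <= _]add0r lerD // mulr_sumr.
by apply: ler_sum_nat => k /andP[_ kc]; apply: below.
Qed.

Lemma cut_sum_le Q c : 0 <= Q -> (c < N)%N ->
  (forall k, (k <= c)%N -> b k <= Q * a k) ->
  (forall k, (c <= k)%N -> (k.+1 < N)%N -> b k.+1 <= Q * a k) ->
  \sum_(k < N) b k <= Q * (\sum_(k < N) a k + a c).
Proof.
move=> Q_ge0 cN below above; rewrite -!(big_mkord xpredT).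
case: N cN above => // N' cN above.
rewrite (big_cat_nat (leq0n c.+1) cN) big_add1 /=.
apply: (le_trans (y := Q * \sum_(0 <= k < c.+1) a k + Q * \sum_(c <= k < N') a k)).
  rewrite !mulr_sumr; apply: lerD; apply: ler_sum_nat => k /andP[ck kN].
    exact: below.
  exact: above.
rewrite -mulrDr ler_wpM2l // big_nat_recr //= addrAC -(big_cat_nat (leq0n c) cN).
by rewrite big_nat_recr //= lerD2r lerDl.
Qed.

Lemma sum_window_le (f : nat -> R) j L : (forall k, 0 <= f k) -> (j + L <= N)%N ->
  \sum_(j <= k < j + L) f k <= \sum_(k < N) f k.
Proof.
move=> f_ge0 jLN; rewrite -(big_mkord xpredT).
rewrite (big_cat_nat (leq0n j) (leq_trans (leq_addr L j) jLN)) /=.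
rewrite (big_cat_nat (leq_addr L j) jLN) /= addrCA lerDl.
by rewrite addr_ge0 // sumr_ge0.
Qed.

Lemma window_sum_ge q j L : 0 <= q -> (j + L <= N)%N ->
  (forall k, (k < j + L)%N -> q * a k <= b k.+1) ->
  (forall k, (j < k < N)%N -> q * a k <= b k) ->
  q * (L%:R - 1) * \sum_(k < N) a k <= L%:R * \sum_(k < N) b k.
Proof.
move=> q_ge0 jLN below above.
have cut c : (j <= c < j + L)%N -> q * (\sum_(k < N) a k - a c) <= \sum_(k < N) b k.
  case/andP=> jc cjL; apply: cut_sum_ge => [|k kc|k /andP[ck kN]].
  - exact: leq_trans cjL jLN.
  - by apply: below; apply: ltn_trans cjL.
  - by apply: above; rewrite kN (leq_ltn_trans jc ck).
have := ler_sum_nat cut; rewrite sumr_const_nat addKn mulr_natl -mulr_sumr sumrB.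
apply: le_trans; rewrite sumr_const_nat addKn -mulrA ler_wpM2l // mulrBl mul1r.
by rewrite mulr_natl lerB // sum_window_le.
Qed.

Lemma window_sum_le Q j L : 0 <= Q -> (j + L <= N)%N ->
  (forall k, (k < j + L)%N -> b k <= Q * a k) ->
  (forall k, (j <= k)%N -> (k.+1 < N)%N -> b k.+1 <= Q * a k) ->
  L%:R * \sum_(k < N) b k <= Q * (L%:R + 1) * \sum_(k < N) a k.
Proof.
move=> Q_ge0 jLN below above.
have cut c : (j <= c < j + L)%N -> \sum_(k < N) b k <= Q * (\sum_(k < N) a k + a c).
  case/andP=> jc cjL; apply: cut_sum_le => // [|k kc|k ck].
  - exact: leq_trans cjL jLN.
  - by apply: below; apply: leq_ltn_trans cjL.
  - by apply: above; apply: leq_trans ck.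
have := ler_sum_nat cut; rewrite sumr_const_nat addKn mulr_natl -mulr_sumr big_split.
move/le_trans; apply; rewrite sumr_const_nat addKn -mulrA ler_wpM2l // mulrDl mul1r.
by rewrite mulr_natl lerD2l sum_window_le.
Qed.

End CutSums.

Lemma natr_D (R : pzSemiRingType) n m :
  (D n m)%:R = \sum_(k < n.+1) 'C(n - k, k)%:R ^+ m :> R.
Proof. by rewrite natr_sum; apply: eq_bigr => k _; rewrite natrX. Qed.

Lemma natr_DS (R : pzSemiRingType) n m : (0 < m)%N ->
  (D n.+1 m)%:R = \sum_(k < n.+1) 'C(n.+1 - k, k)%:R ^+ m :> R.
Proof.
by move=> m_gt0; rewrite natr_D big_ord_recr /= subnn bin0n expr0n eqn0Ngt m_gt0 addr0.
Qed.

Lemma D_gt0 n m : (0 < D n m)%N.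
Proof. by rewrite /D big_ord_recl subn0 bin0 exp1n ltn_addr. Qed.

Section DWindows.
Variables (R : realFieldType) (m n j L : nat).
Hypothesis m_gt0 : (0 < m)%N.

Let a_ge0 k : 0 <= 'C(n - k, k)%:R ^+ m :> R. Proof. exact: exprn_ge0. Qed.
Let b_ge0 k : 0 <= 'C(n.+1 - k, k)%:R ^+ m :> R. Proof. exact: exprn_ge0. Qed.

Lemma D_window_lower (q : R) : 1 <= q -> (j + L <= n.+1)%N ->
  (q - 1) * n.+1%:R <= (2 * q - 1) * j%:R -> (q + 2) * (j + L)%:R <= n.+2%:R ->
  q ^+ m * (L%:R - 1) * (D n m)%:R <= L%:R * (D n.+1 m)%:R.
Proof.
move=> q_ge1 jLn hj hjL; rewrite natr_DS // natr_D.
apply: (window_sum_ge a_ge0 b_ge0 (j := j)) => // [|k kjL|k /andP[jk kn]].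
- by rewrite exprn_ge0 //; lra.
- rewrite -exprMn lerXn2r ?nnegrE ?mulr_ge0 //; first by lra.
  apply: ler_mul_fibbin_shift; first by lra.
  by apply: le_trans hjL; rewrite ler_wpM2l ?ler_nat //; lra.
- rewrite -exprMn lerXn2r ?nnegrE ?mulr_ge0 //; first by lra.
  apply: ler_mul_fibbin; first by rewrite -ltnS.
  by apply: le_trans hj _; rewrite ler_wpM2l ?ler_nat 1?ltnW //; lra.
Qed.

Lemma D_window_upper (Q : R) : 1 <= Q -> (j + L <= n.+1)%N ->
  n.+2%:R <= (Q + 2) * j.+1%:R -> (2 * Q - 1) * (j + L)%:R <= (Q - 1) * n.+1%:R ->
  L%:R * (D n.+1 m)%:R <= Q ^+ m * (L%:R + 1) * (D n m)%:R.
Proof.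
move=> Q_ge1 jLn hj hjL; rewrite natr_DS // natr_D.
apply: (window_sum_le (b := fun k => 'C(n.+1 - k, k)%:R ^+ m) a_ge0 (j := j))
  => // [|k kjL|k jk _].
- by rewrite exprn_ge0 //; lra.
- rewrite -exprMn lerXn2r ?nnegrE ?mulr_ge0 //; first by lra.
  apply: ler_fibbin_mul => //; apply: le_trans hjL.
  by rewrite ler_wpM2l ?ler_nat 1?ltnW //; lra.
- rewrite -exprMn lerXn2r ?nnegrE ?mulr_ge0 //; first by lra.
  apply: ler_fibbin_shift_mul; first by lra.
  by apply: le_trans hj _; rewrite ler_wpM2l ?ler_nat //; lra.
Qed.

End DWindows.

Lemma eventually_window (R : realType) (a b : R) (L : nat) : 0 <= a -> a < b ->
  \forall x \near \oo, exists j : nat, a * x%:R <= j%:R /\ (j + L)%:R <= b * x%:R.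
Proof.
move=> a_ge0 ab; near=> x.
exists (Num.truncn (a * x%:R)).+1; split; first exact/ltW/truncnS_gt.
have := truncn_le (a * x%:R); rewrite mulr_ge0 // => trunc_le.
rewrite natrD -natr1.
suff : 1 + L%:R <= (b - a) * x%:R by lra.
near: x; apply: filterS (nbhs_infty_ger ((1 + L%:R) / (b - a))) => x.
by rewrite ler_pdivrMr ?subr_gt0 // mulrC.
Unshelve. all: by end_near.
Qed.

Section DEventualBounds.
Variables (R : realType) (m L : nat).
Hypothesis m_gt0 : (0 < m)%N.

Lemma D_eventually_lower (q : R) : 1 <= q -> q ^+ 2 < q + 1 ->
  \forall n \near \oo, q ^+ m * (L%:R - 1) * (D n m)%:R <= L%:R * (D n.+1 m)%:R.
Proof.
move=> q_ge1 q_lt; have q21 : 0 < 2 * q - 1 by lra.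
have al_be : (q - 1) / (2 * q - 1) < (q + 2)^-1.
  by rewrite ltr_pdivrMr // [_^-1 * _]mulrC ltr_pdivlMr; nra.
near=> n.
have [j [hj hjL]] : exists j : nat,
    (q - 1) / (2 * q - 1) * n%:R <= j%:R /\ (j + L.+1)%:R <= (q + 2)^-1 * n%:R.
  by near: n; apply: eventually_window; rewrite ?divr_ge0 //; lra.
rewrite mulrAC ler_pdivrMr // in hj.
rewrite -addSnnS mulrC ler_pdivlMr ?addr_gt0 // in hjL; last by lra.
apply: (D_window_lower m_gt0 (j := j.+1)) => //; try lra.
have := ler0n R (j.+1 + L); rewrite -(ler_nat R); nra.
Unshelve. all: by end_near.
Qed.

Lemma D_eventually_upper (Q : R) : 1 <= Q -> Q + 1 < Q ^+ 2 ->
  \forall n \near \oo, L%:R * (D n.+1 m)%:R <= Q ^+ m * (L%:R + 1) * (D n m)%:R.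
Proof.
move=> Q_ge1 Q_gt; have Q21 : 0 < 2 * Q - 1 by lra.
have al_be : (Q + 2)^-1 < (Q - 1) / (2 * Q - 1).
  by rewrite ltr_pdivlMr // mulrC -[_ * _^-1]/((2 * Q - 1) / (Q + 2)) ltr_pdivrMr; nra.
near=> n.
have [j [hj hjL]] : exists j : nat,
    (Q + 2)^-1 * n%:R <= j%:R /\ (j + L.+1)%:R <= (Q - 1) / (2 * Q - 1) * n%:R.
  by near: n; apply: eventually_window; rewrite ?invr_ge0 //; lra.
rewrite mulrC ler_pdivrMr ?addr_gt0 // in hj; last by lra.
rewrite -addSnnS mulrAC ler_pdivlMr // in hjL.
apply: (D_window_upper m_gt0 (j := j.+1)) => //; try lra.
have := ler0n R (j.+1 + L); rewrite -(ler_nat R); nra.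
Unshelve. all: by end_near.
Qed.

End DEventualBounds.

Lemma cvg_ratio_squeeze (R : realType) (u v : nat -> R) (l : R) (m : nat) :
  1 < l -> (forall n, 0 < v n) ->
  (forall (q : R) (L : nat), 1 <= q < l ->
    \forall n \near \oo, q ^+ m * (L%:R - 1) * v n <= L%:R * u n) ->
  (forall (Q : R) (L : nat), l < Q ->
    \forall n \near \oo, L%:R * u n <= Q ^+ m * (L%:R + 1) * v n) ->
  (fun n => u n / v n) @ \oo --> l ^+ m.
Proof.
move=> l_gt1 v_gt0 lower upper; apply/cvgrPdist_le => e e_gt0.
have [d d_gt0 near_l] : exists2 d, 0 < d &
    forall x, `|l - x| < d -> `|l ^+ m - x ^+ m| <= e / 2.
  have /cvgrPdist_le /(_ (e / 2)) := @exprn_continuous R m l.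
  by case/(_ _)/nbhs_ballP => [|d d_gt0 hd]; [lra | exists d].
pose t := Num.min (d / 2) ((l - 1) / 2).
have t_gt0 : 0 < t by rewrite lt_min !divr_gt0 //; lra.
have t_d : t < d by rewrite gt_min ltr_pdivrMr ?ltr_pMr //; lra.
have t_l : t < l - 1 by rewrite gt_min orbC ltr_pdivrMr ?ltr_pMr //; lra.
have hq : `|l ^+ m - (l - t) ^+ m| <= e / 2.
  by apply: near_l; rewrite (_ : l - (l - t) = t) ?gtr0_norm //; ring.
have hQ : `|l ^+ m - (l + t) ^+ m| <= e / 2.
  by apply: near_l; rewrite (_ : l - (l + t) = - t) ?normrN ?gtr0_norm //; ring.
move: hq hQ; rewrite !ler_norml => /andP[hq1 hq2] /andP[hQ1 hQ2].
(* Both (l -+ t)^m are at most l^m + e/2, and L makes the averaging error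
   (l^m + e/2)/L smaller than e/2. *)
pose L := (Num.truncn (2 * (l ^+ m + e / 2) / e)).+1.
have := truncnS_gt (2 * (l ^+ m + e / 2) / e); rewrite -/L ltr_pdivrMr // => L_big.
have L_gt0 : 0 < L%:R :> R by rewrite ltr0n.
near=> n.
have lo : (l - t) ^+ m * (L%:R - 1) * v n <= L%:R * u n by near: n; apply: lower; lra.
have hi : L%:R * u n <= (l + t) ^+ m * (L%:R + 1) * v n by near: n; apply: upper; lra.
have r_def : u n = u n / v n * v n by rewrite divfK // gt_eqF.
rewrite r_def mulrA ler_pM2r // in lo; rewrite r_def mulrA ler_pM2r // in hi.
rewrite ler_norml; apply/andP; split; nra.
Unshelve. all: by end_near.
Qed.

Section GoldenRatio.
Variable R : rcfType.

Definition golden_ratio : R := (1 + Num.sqrt 5) / 2.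

Let sqrt5_sqr : Num.sqrt 5 ^+ 2 = 5 :> R.
Proof. by rewrite sqr_sqrtr // ler0n. Qed.

Lemma golden_ratio_sqr : golden_ratio ^+ 2 = golden_ratio + 1.
Proof.
rewrite /golden_ratio (_ : ((1 + Num.sqrt 5) / 2) ^+ 2 =
  (1 + Num.sqrt 5) / 2 + 1 + (Num.sqrt 5 ^+ 2 - 5) / 4); last by field.
by rewrite sqrt5_sqr subrr mul0r addr0.
Qed.

Lemma golden_ratio_gt1 : 1 < golden_ratio.
Proof. by have := sqrtr_ge0 (5 : R); have := sqrt5_sqr; rewrite /golden_ratio; nra. Qed.

Lemma golden_ratio_expn m :
  golden_ratio ^+ m = ((fib m)%:R * Num.sqrt 5 + (lucas m)%:R) / 2.
Proof.
suff /(_ m)[] : forall m,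
    golden_ratio ^+ m = ((fib m)%:R * Num.sqrt 5 + (lucas m)%:R) / 2 /\
    golden_ratio ^+ m.+1 = ((fib m.+1)%:R * Num.sqrt 5 + (lucas m.+1)%:R) / 2 by [].
elim=> [|k [IHk IHk1]]; first by rewrite expr0 expr1 /golden_ratio /=; split; field.
split=> //; rewrite (_ : k.+2 = (2 + k)%N) // exprD golden_ratio_sqr mulrDl mul1r -exprS.
by rewrite IHk IHk1 /= !natrD; field.
Qed.

Lemma sqr_lt_addr1 (x : R) : 0 <= x -> x < golden_ratio -> x ^+ 2 < x + 1.
Proof.
have := golden_ratio_sqr; have := golden_ratio_gt1.
move=> phi_gt1 phi_sqr x_ge0 x_lt.
have : (x - golden_ratio) * (x + golden_ratio - 1) < 0 by rewrite nmulr_rlt0; lra.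
by rewrite expr2 in phi_sqr *; nra.
Qed.

Lemma sqr_gt_addr1 (x : R) : golden_ratio < x -> x + 1 < x ^+ 2.
Proof.
have := golden_ratio_sqr; have := golden_ratio_gt1.
move=> phi_gt1 phi_sqr x_gt.
have : 0 < (x - golden_ratio) * (x + golden_ratio - 1) by rewrite mulr_gt0 //; lra.
by rewrite expr2 in phi_sqr *; nra.
Qed.

End GoldenRatio.

Theorem proposition1 (R : realType) (m : nat) (hm : (0 < m)%N) :
  (fun n : nat => ((D n.+1 m)%:R / (D n m)%:R : R)) @ \oo -->
    ((((fib m)%:R * Num.sqrt 5 + (lucas m)%:R) / 2 : R) : R).
Proof.
have phi_gt1 := golden_ratio_gt1 R.
rewrite -golden_ratio_expn.
apply: (cvg_ratio_squeeze phi_gt1) => [n|q L /andP[q_ge1 q_lt]|Q L Q_gt].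
- by rewrite ltr0n D_gt0.
- by apply: D_eventually_lower => //; apply: sqr_lt_addr1 => //; lra.
- by apply: D_eventually_upper => //; [lra | apply: sqr_gt_addr1].
Qed.
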